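(* Let $S$ be a field and $X,Y\in\mathbb{M}_2(S)$ with determinants $\delta,\delta'$ and supertraces $\tau=\operatorname{str}(X)$, $\tau'=\operatorname{str}(Y)$. Then $[X,Y]\notin\mathrm{GL}_2(S)$ if and only if $$\delta\tau'^2+\delta'\tau^2+\operatorname{tr}(XY)\,\tau'\tau=\operatorname{str}(XY)\operatorname{str}(YX).$$ Moreover, $X$ is a scalar matrix if and only if this equation holds for all $Y\in\mathbb{M}_2(S)$.
   Context: $[X,Y]=XY-YX$. For $M=(m_{ij})\in\mathbb{M}_2(S)$, the supertrace is $\operatorname{str}(M)=m_{11}-m_{22}$. *)

From HB Require Import structures.
From mathcomp Require Import all_boot all_order all_algebra.
Set Implicit Arguments. Unset Strict Implicit. Unset Printing Implicit Defensive.
Import GRing.Theory.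
Local Open Scope ring_scope.

Definition str (S : ringType) (M : 'M[S]_2) : S := M ord0 ord0 - M ord_max ord_max.

Definition commx (S : ringType) (X Y : 'M[S]_2) : 'M[S]_2 := X *m Y - Y *m X.

From HB Require Import structures.
From mathcomp Require Import all_boot all_order all_algebra ring.
Import GRing.Theory.
Local Open Scope ring_scope.

(** Expanding in the eight entries of [X] and [Y], the left-hand side minus
    the right-hand side of the equation is exactly [- det [X, Y]]; over a
    field this gives the first equivalence.  A scalar [X] commutes with every
    [Y].  Conversely, testing [Y = E_12], [E_21] and [E_12 + E_21] gives
    [det [X, Y] = - x_21^2], [- x_12^2] and [(x_11 - x_22)^2 - (x_12 - x_21)^2],
    which all vanish only if [X] is diagonal with equal diagonal entries. *)

Section Matrix2.
Variable R : comNzRingType.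
Implicit Types A B X Y : 'M[R]_2.

Lemma lift0_ord0 : lift ord0 ord0 = ord_max :> 'I_2.
Proof. exact: val_inj. Qed.

Lemma mulmx2E A B i j :
  (A *m B) i j = A i ord0 * B ord0 j + A i ord_max * B ord_max j.
Proof. by rewrite !mxE !big_ord_recl big_ord0 addr0 lift0_ord0. Qed.

Lemma commxE X Y i j : commx X Y i j = (X *m Y) i j - (Y *m X) i j.
Proof. by rewrite /commx !mxE. Qed.

Lemma mxtrace2 A : \tr A = A ord0 ord0 + A ord_max ord_max.
Proof. by rewrite /mxtrace !big_ord_recl big_ord0 addr0 lift0_ord0. Qed.

Lemma det_mx2 A :
  \det A = A ord0 ord0 * A ord_max ord_max - A ord0 ord_max * A ord_max ord0.
Proof.
rewrite (expand_det_row _ ord0) !big_ord_recl big_ord0 /cofactor !det_mx11.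
rewrite !mxE /= expr0 expr1 mul1r mulN1r addr0 mulrN lift0_ord0.
by congr (_ * A _ _ - _ * A _ _); apply: val_inj.
Qed.

Lemma mx2_scalar A :
  A ord0 ord_max = 0 -> A ord_max ord0 = 0 -> A ord0 ord0 = A ord_max ord_max ->
  A = (A ord0 ord0)%:M.
Proof.
move=> A01 A10 A00; apply/matrixP=> -[[|[|//]] i2] [[|[|//]] j2]; rewrite !mxE /=.
- by rewrite mulr1n; congr (A _ _); apply: val_inj.
- by rewrite mulr0n -A01; congr (A _ _); apply: val_inj.
- by rewrite mulr0n -A10; congr (A _ _); apply: val_inj.
- by rewrite mulr1n A00; congr (A _ _); apply: val_inj.
Qed.

Lemma str_identity_subE X Y :
  \det X * str Y ^+ 2 + \det Y * str X ^+ 2 + \tr (X *m Y) * str Y * str X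
    - str (X *m Y) * str (Y *m X) = - \det (commx X Y).
Proof. by rewrite !det_mx2 mxtrace2 /str !commxE !mulmx2E; ring. Qed.

Lemma det_commx_eq0_str X Y :
  \det (commx X Y) = 0 <->
  \det X * str Y ^+ 2 + \det Y * str X ^+ 2 + \tr (X *m Y) * str Y * str X
    = str (X *m Y) * str (Y *m X).
Proof.
split=> [det0 | /eqP]; first by apply/eqP; rewrite -subr_eq0 str_identity_subE det0 oppr0.
by rewrite -subr_eq0 str_identity_subE oppr_eq0 => /eqP.
Qed.

Lemma det_commx_delta01 X :
  \det (commx X (delta_mx ord0 ord_max)) = - X ord_max ord0 ^+ 2.
Proof. by rewrite det_mx2 !commxE !mulmx2E !mxE /=; ring. Qed.

Lemma det_commx_delta10 X :
  \det (commx X (delta_mx ord_max ord0)) = - X ord0 ord_max ^+ 2.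
Proof. by rewrite det_mx2 !commxE !mulmx2E !mxE /=; ring. Qed.

Lemma det_commx_delta01_10 X :
  \det (commx X (delta_mx ord0 ord_max + delta_mx ord_max ord0)) =
    (X ord0 ord0 - X ord_max ord_max) ^+ 2 - (X ord0 ord_max - X ord_max ord0) ^+ 2.
Proof. by rewrite det_mx2 !commxE !mulmx2E !mxE /=; ring. Qed.

Lemma commx_scalar a Y : commx a%:M Y = 0.
Proof. by rewrite /commx scalar_mxC subrr. Qed.

End Matrix2.

Lemma is_scalar_mx2P (R : idomainType) (X : 'M[R]_2) :
  reflect (forall Y, \det (commx X Y) = 0) (is_scalar_mx X).
Proof.
apply: (iffP idP) => [/is_scalar_mxP[a ->] Y | detC0].
  by rewrite commx_scalar det0.
have sqr_eq0 (x : R) : - x ^+ 2 = 0 -> x = 0 by move/eqP; rewrite oppr_eq0 sqrf_eq0 => /eqP.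
have X10 : X ord_max ord0 = 0 by apply: sqr_eq0; rewrite -det_commx_delta01.
have X01 : X ord0 ord_max = 0 by apply: sqr_eq0; rewrite -det_commx_delta10.
have X00 : X ord0 ord0 = X ord_max ord_max.
  apply/eqP; rewrite -subr_eq0 -sqrf_eq0; apply/eqP.
  by have := @det_commx_delta01_10 _ X; rewrite detC0 X01 X10 subrr expr0n subr0.
by apply/is_scalar_mxP; exists (X ord0 ord0); apply: mx2_scalar.
Qed.

Lemma commx_notin_unitmxP (F : fieldType) (X Y : 'M[F]_2) :
  reflect (\det (commx X Y) = 0) (commx X Y \notin unitmx).
Proof. by rewrite unitmxE unitfE negbK; apply: eqP. Qed.

Theorem corollary4p11 (S : fieldType) (X : 'M[S]_2) :
  (forall Y : 'M[S]_2,
     commx X Y \notin unitmx <->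
     \det X * str Y ^+ 2 + \det Y * str X ^+ 2 + \tr (X *m Y) * str Y * str X
       = str (X *m Y) * str (Y *m X))
  /\
  (is_scalar_mx X <->
     forall Y : 'M[S]_2,
       \det X * str Y ^+ 2 + \det Y * str X ^+ 2 + \tr (X *m Y) * str Y * str X
         = str (X *m Y) * str (Y *m X)).
Proof.
split=> [Y | ]; first by rewrite -(rwP (commx_notin_unitmxP _ X Y)); exact: det_commx_eq0_str.
rewrite -(rwP (is_scalar_mx2P _ X)).
by split=> [detC0 | str_eq] Y; apply/det_commx_eq0_str.
Qed.
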